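(* Let $X$ be a Banach space, $D\subset X$ a closed, bounded and convex set, and $\tau$ a locally convex topology on $D$ containing the relative weak topology of $D$. Suppose $D$ is $\tau$-strongly regular. Let $C$ be a nonempty convex subset of $D$. Then for every $\varepsilon>0$ and every nonempty set $O\in\tau|_C$ there exist $n\in\mathbb{N}$ and nonempty sets $O_1,\dots,O_n\in\tau|_C$ with $O_i\subset O$ for all $i$, such that $$\operatorname{diam}\Big(\sum_{i=1}^n\tfrac{1}{n}O_i\Big)<\varepsilon.$$
   Context: For $C\subset D$, $\tau|_C$ denotes the topology induced by $\tau$ on $C$. A topology is locally convex if it has a basis of convex open sets. $D$ is called $\tau$-strongly regular if for every bounded convex subset $C$ of $D$ and every $\varepsilon>0$ there is a convex combination $\sum_i\lambda_iU_i$ of nonempty $\tau|_C$-open sets $U_i$ with diameter less than $\varepsilon$. Sums of sets are Minkowski sums: $\sum_i\lambda_iU_i=\{\sum_i\lambda_iu_i: u_i\in U_i\}$. *)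

From mathcomp Require Import all_boot all_order all_algebra.
From mathcomp Require Import all_classical all_reals all_analysis.
Set Implicit Arguments. Unset Strict Implicit. Unset Printing Implicit Defensive.
Import Order.TTheory GRing.Theory Num.Theory.
Import numFieldNormedType.Exports.
Local Open Scope classical_set_scope.
Local Open Scope ring_scope.

Section Defs.
Variables (R : realType) (V : normedModType R).

Definition convex (A : set V) : Prop :=
  forall x y (t : R), A x -> A y -> 0 <= t -> t <= 1 -> A (t *: x + (1 - t) *: y).

Definition cont_lin_functional (f : V -> R) : Prop :=
  (forall (a : R) (x y : V), f (a *: x + y) = a * f x + f y) /\ continuous f.

Definition weakly_open (U : set V) : Prop :=
  forall x, U x -> exists (k : nat) (f : 'I_k -> V -> R) (e : R),
    (forall i, cont_lin_functional (f i)) /\ 0 < e /\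
    [set y | forall i, `|f i y - f i x| < e] `<=` U.

Definition topology_on (D : set V) (tau : set (set V)) : Prop :=
  (forall U, tau U -> U `<=` D) /\ tau D /\
  (forall U W, tau U -> tau W -> tau (U `&` W)) /\
  (forall (I : Type) (F : I -> set V), (forall i, tau (F i)) -> tau (\bigcup_i F i)).

Definition locally_convex_on (tau : set (set V)) : Prop :=
  forall U x, tau U -> U x -> exists W, [/\ tau W, convex W, W x & W `<=` U].

Definition contains_rel_weak (D : set V) (tau : set (set V)) : Prop :=
  forall U, weakly_open U -> tau (U `&` D).

Definition induced_top (tau : set (set V)) (C : set V) : set (set V) :=
  [set O | exists U, tau U /\ O = U `&` C].

(* diameter, valued in extended reals (set_diam set0 = -oo) *)
Definition set_diam (A : set V) : \bar R :=
  ereal_sup [set (`|x - y|)%:E | x in A & y in A].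

Definition mink_comb (n : nat) (lam : 'I_n -> R) (U : 'I_n -> set V) : set V :=
  [set x | exists u : 'I_n -> V, (forall i, U i (u i)) /\ x = \sum_(i < n) lam i *: u i].

Definition strongly_regular (D : set V) (tau : set (set V)) : Prop :=
  forall C : set V, C `<=` D -> C !=set0 -> bounded_set C -> convex C ->
  forall eps : R, 0 < eps ->
  exists (n : nat) (lam : 'I_n -> R) (U : 'I_n -> set V),
    [/\ (forall i, 0 <= lam i), \sum_(i < n) lam i = 1,
        (forall i, induced_top tau C (U i) /\ U i !=set0) &
        (set_diam (mink_comb lam U) < eps%:E)%E].
End Defs.

From mathcomp Require Import all_boot all_order all_algebra.
From mathcomp Require Import all_classical all_reals all_analysis.
From mathcomp Require Import ring lra.
Import Order.TTheory GRing.Theory Num.Theory.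
Import numFieldNormedType.Exports.
Local Open Scope classical_set_scope.
Local Open Scope ring_scope.

(* Write O = U ∩ C, pick a convex tau-open W ⊆ U meeting C, and apply strong
   regularity to W ∩ C: some Σ_i λ_i U_i has diameter < ε/2.  Shrink each U_i to
   a nonempty convex tau|_C-open A_i and approximate the weights λ_i by fractions
   c_i/N.  Listing A_i exactly c_i times gives N subsets of O whose equal-weight
   average lies in Σ_i (c_i/N) A_i, since by convexity an average of points of A_i
   is a point of A_i.  If the norm is bounded by M on D, the diameter of that set
   exceeds the one of Σ_i λ_i A_i by at most 2 M Σ_i |c_i/N - λ_i| < ε/2. *)

Section ConvexSums.
Context {R : realType} {V : normedModType R}.

Lemma convexI {A B : set V} : convex A -> convex B -> convex (A `&` B).
Proof. by move=> cA cB x y t [Ax Bx] [Ay By] t0 t1; split; [exact: cA|exact: cB]. Qed.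

Lemma convex_sum_count {A : set V} {I : Type} (s : seq I) {P : pred I} {F : I -> V} :
  convex A -> A !=set0 -> (forall k, P k -> A (F k)) ->
  exists2 a, A a & \sum_(k <- s | P k) F k = (count P s)%:R *: a.
Proof.
move=> cA [a0 Aa0] AF; elim: s => [|k s [a Aa IH]].
  by exists a0; rewrite // big_nil mulr0n scale0r.
rewrite big_cons /=; case: ifPn => Pk; last by exists a; rewrite ?add0n.
set m := count P s; have m1_gt0 : 0 < m.+1%:R :> R by rewrite ltr0n.
(* m a + F k = (m + 1) b, for b the convex combination below *)
exists ((m.+1%:R)^-1 *: F k + (1 - (m.+1%:R)^-1) *: a).
  by apply: cA => //; [exact: AF | rewrite invf_le1 // ler1n].
rewrite IH add1n scalerDr !scalerA mulfV ?lt0r_neq0 // scale1r mulrBr mulr1.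
by rewrite mulfV ?lt0r_neq0 // -natr1 addrK.
Qed.

Lemma convex_sum_card {T : finType} {A : set V} {P : pred T} {F : T -> V} :
  convex A -> A !=set0 -> (forall k, P k -> A (F k)) ->
  exists2 a, A a & \sum_(k | P k) F k = #|P|%:R *: a.
Proof.
move=> cA A0 AF; have [a Aa ->] := convex_sum_count (index_enum T) cA A0 AF.
by exists a; rewrite // -sum1_count sum1_card.
Qed.

Lemma sum_regroup_convex {T I : finType} {g : T -> I} {A : I -> set V} {u : T -> V} :
  (forall i, convex (A i)) -> (forall i, A i !=set0) -> (forall k, A (g k) (u k)) ->
  exists2 a : I -> V, (forall i, A i (a i)) &
    \sum_k u k = \sum_i #|[pred k | g k == i]|%:R *: a i.
Proof.
move=> cA A0 Au.
have fiber_avg i : exists a, A i a /\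
    \sum_(k | g k == i) u k = #|[pred k | g k == i]|%:R *: a.
  have Afiber k : g k == i -> A i (u k) by move/eqP <-.
  by have [a] := convex_sum_card (cA i) (A0 i) Afiber; exists a.
have [a aP] := choice fiber_avg.
exists a => [i|]; first by case: (aP i).
by rewrite (partition_big g xpredT) //=; apply: eq_bigr => i _; case: (aP i).
Qed.

End ConvexSums.

Definition repeat_ord {n} (c : 'I_n -> nat) : seq 'I_n :=
  flatten [seq nseq (c j) j | j <- enum 'I_n].

Lemma count_repeat_ord {n} (c : 'I_n -> nat) i : count (pred1 i) (repeat_ord c) = c i.
Proof.
rewrite /repeat_ord count_flatten sumnE big_map big_map enumT (bigD1 i) //=.
rewrite count_nseq /= eqxx mul1n big1 ?addn0 // => j /negbTE ji.
by rewrite count_nseq /= ji.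
Qed.

Lemma exists_fibers {n} (c : 'I_n -> nat) :
  exists N (g : 'I_N -> 'I_n), forall i, #|[pred k | g k == i]| = c i.
Proof.
exists (size (repeat_ord c)), (tnth (in_tuple (repeat_ord c))) => i.
rewrite -[RHS]count_repeat_ord -sum1_count big_tnth -sum1_card.
by apply: eq_bigl => k; rewrite inE.
Qed.

Lemma sum_card_fibers {T I : finType} (g : T -> I) :
  (\sum_i #|[pred k | g k == i]|)%N = #|T|.
Proof.
rewrite -sum1_card (partition_big g xpredT) //=.
by apply: eq_bigr => i _; rewrite sum1_card.
Qed.

Section Weights.
Context {R : realType}.

Definition fiber_freq {T I : finType} (g : T -> I) (i : I) : R :=
  #|[pred k | g k == i]|%:R / #|T|%:R.

Lemma sum_abs_sub_le {n} {mu lam : 'I_n -> R} {eta : R} : 0 <= eta ->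
  \sum_i mu i = \sum_i lam i -> (forall i, lam i - eta <= mu i) ->
  \sum_i `|mu i - lam i| <= n%:R * (2 * eta).
Proof.
move=> eta_ge0 sum_eq lb.
(* |x| <= x + 2 eta once x >= - eta, and the x = mu i - lam i sum to 0 *)
apply: le_trans (_ : \sum_i ((mu i - lam i) + 2 * eta) <= _).
  by apply: ler_sum => i _; have := lb i; rewrite ler_norml => ?; apply/andP; split; lra.
rewrite big_split /= sumrB sum_eq subrr add0r sumr_const card_ord.
by rewrite (mulr_natl (2 * eta)).
Qed.

Lemma fiber_freq_approx {n} {lam : 'I_n -> R} {delta : R} :
  (forall i, 0 <= lam i) -> \sum_i lam i = 1 -> 0 < delta ->
  exists N (g : 'I_N -> 'I_n), (0 < N)%N /\ \sum_i `|fiber_freq g i - lam i| < delta.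
Proof.
move=> lam_ge0 lam_sum1 delta_gt0.
pose K := ((Num.truncn (2 * n%:R / delta)).+1 + n)%N.
pose c i := Num.truncn (K%:R * lam i).
have [N [g fiberE]] := exists_fibers c.
have NE : N%:R = \sum_i (c i)%:R :> R.
  by rewrite -natr_sum -(card_ord N) -(sum_card_fibers g); under eq_bigr do rewrite fiberE.
have c_itv i : (c i)%:R <= K%:R * lam i < (c i)%:R + 1.
  by rewrite natr1; exact/truncn_itv/mulr_ge0.
have K_sum : \sum_i K%:R * lam i = K%:R :> R by rewrite -mulr_sumr lam_sum1 mulr1.
have N_le_K : N%:R <= K%:R :> R.
  by rewrite NE -K_sum; apply: ler_sum => i _; case/andP: (c_itv i).
have K_le : K%:R <= N%:R + n%:R :> R.
  apply: le_trans (_ : \sum_i ((c i)%:R + 1) <= _).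
    by rewrite -[in leLHS]K_sum; apply: ler_sum => i _; case/andP: (c_itv i) => _ /ltW.
  by rewrite big_split /= -NE sumr_const card_ord.
have n_lt_K : n%:R < K%:R :> R by rewrite ltr_nat /K addSnnS leq_addl.
have K_gt0 : 0 < K%:R :> R by apply: le_lt_trans n_lt_K.
have N_gt0 : 0 < N%:R :> R by lra.
exists N, g; split; first by rewrite -(ltr0n R).
have freq_lb i : lam i - K%:R^-1 <= fiber_freq g i.
  rewrite /fiber_freq card_ord fiberE.
  have /andP[_ /ltW ub] := c_itv i.
  apply: le_trans (_ : (c i)%:R / K%:R <= _).
    by rewrite ler_pdivlMr // mulrBl mulVf ?gt_eqF // lerBlDr mulrC.
  by rewrite ler_wpM2l // lef_pV2 ?posrE.
have freq_sum : \sum_i fiber_freq g i = \sum_i lam i.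
  rewrite lam_sum1 /fiber_freq card_ord -mulr_suml.
  by under eq_bigr do rewrite fiberE; rewrite -NE mulfV ?gt_eqF.
apply: le_lt_trans (sum_abs_sub_le _ freq_sum freq_lb) _; first by rewrite invr_ge0 ltW.
have K_gt : 2 * n%:R / delta < K%:R.
  by apply: lt_le_trans (truncnS_gt _) _; rewrite ler_nat leq_addr.
by rewrite mulrA ltr_pdivrMr // [delta * _]mulrC -ltr_pdivrMr // [_ * 2]mulrC.
Qed.

End Weights.

Section Diameter.
Context {R : realType} {V : normedModType R}.

Lemma norm_comb_sub_le {n} (mu lam : 'I_n -> R) (a : 'I_n -> V) (M : R) :
  (forall i, `|a i| <= M) ->
  `|\sum_i mu i *: a i - \sum_i lam i *: a i| <= M * \sum_i `|mu i - lam i|.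
Proof.
move=> aM; rewrite -sumrB mulr_sumr; apply: le_trans (ler_norm_sum _ _ _) _.
by apply: ler_sum => i _; rewrite -scalerBl normrZ mulrC ler_wpM2r.
Qed.

Lemma diam_mink_avg_le {n N} (g : 'I_N -> 'I_n) (lam : 'I_n -> R)
    (U A : 'I_n -> set V) (M r : R) :
  (forall i, convex (A i)) -> (forall i, A i !=set0) -> (forall i, A i `<=` U i) ->
  (forall i z, A i z -> `|z| <= M) ->
  (set_diam (mink_comb lam U) <= r%:E)%E ->
  (set_diam (mink_comb (fun _ => N%:R^-1 : R)%R (A \o g))
     <= (r + (M + M) * \sum_i `|fiber_freq g i - lam i|)%R%:E)%E.
Proof.
move=> cA A0 AU AM diamU.
have avgE u : (forall k, A (g k) (u k)) -> exists2 a, (forall i, A i (a i)) &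
    \sum_k N%:R^-1 *: u k = \sum_i fiber_freq g i *: a i.
  move=> Au; have [a Aa uE] := sum_regroup_convex cA A0 Au.
  exists a => //; rewrite -scaler_sumr uE scaler_sumr; apply: eq_bigr => i _.
  by rewrite scalerA /fiber_freq card_ord mulrC.
have lam_close a b : (forall i, A i (a i)) -> (forall i, A i (b i)) ->
    `|\sum_i lam i *: a i - \sum_i lam i *: b i| <= r.
  move=> Aa Ab; rewrite -lee_fin; apply: le_trans diamU; apply: ereal_sup_ubound.
  exists (\sum_i lam i *: a i); first by exists a; split => // i; apply: AU.
  by exists (\sum_i lam i *: b i) => //; exists b; split => // i; apply: AU.
apply: ge_ereal_sup => _ [_ [u [Au ->]] [_ [v [Av ->]] <-]].
have [a Aa ->] := avgE u Au; have [b Ab ->] := avgE v Av.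
rewrite lee_fin mulrDl addrCA.
apply: le_trans (ler_distD (\sum_i lam i *: a i) _ _) _.
apply: lerD; first by apply: norm_comb_sub_le => i; apply: AM (Aa i).
apply: le_trans (ler_distD (\sum_i lam i *: b i) _ _) _.
apply: lerD; first exact: lam_close.
rewrite (distrC (\sum_i lam i *: b i)).
by apply: norm_comb_sub_le => i; apply: AM (Ab i).
Qed.

Lemma induced_open_convex_subset {D C W O : set V} {tau : set (set V)} :
  topology_on D tau -> locally_convex_on tau -> tau W -> convex W -> convex C ->
  induced_top tau (W `&` C) O -> O !=set0 ->
  exists A, [/\ induced_top tau C A, A !=set0, convex A & A `<=` O].
Proof.
move=> [_ [_ [tauI _]]] lc tW cW cC [V' [tV' ->]] [y [V'y [Wy Cy]]].
have [W' [tW' cW' W'y W'V']] := lc V' y tV' V'y.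
exists (W' `&` W `&` C); split.
- by exists (W' `&` W); split => //; exact: tauI.
- by exists y.
- by apply: convexI => //; apply: convexI.
- by move=> z [[/W'V' V'z Wz] Cz].
Qed.

End Diameter.

Theorem lemma2p2 (R : realType) (X : completeNormedModType R)
  (D : set X) (tau : set (set X)) :
  closed D -> bounded_set D -> convex D ->
  topology_on D tau -> locally_convex_on tau -> contains_rel_weak D tau ->
  strongly_regular D tau ->
  forall C : set X, C !=set0 -> convex C -> C `<=` D ->
  forall eps : R, 0 < eps ->
  forall O : set X, induced_top tau C O -> O !=set0 ->
  exists (n : nat) (Os : 'I_n -> set X),
    [/\ (0 < n)%N,
        (forall i, induced_top tau C (Os i) /\ Os i !=set0 /\ Os i `<=` O) &
        (set_diam (mink_comb (fun _ => (n%:R)^-1 : R)%R Os) < eps%:E)%E].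
Proof.
move=> _ bD _ topD lcD _ srD C _ cC CD eps eps_gt0 O [U [tU ->]] [x0 [Ux0 Cx0]].
have [W [tW cW Wx0 WU]] := lcD U x0 tU Ux0.
have [M M_gt0 DM] := pinfty_ex_gt0 bD.
have WCD : W `&` C `<=` D by move=> z [_ /CD].
have bWC : [bounded x | x in W `&` C].
  exact: filterS (fun M' DM' z WCz => DM' z (WCD z WCz)) bD.
have WC0 : W `&` C !=set0 by exists x0.
have eps2_gt0 : 0 < eps / 2 by rewrite divr_gt0.
have [n [lam [Ui [lam_ge0 lam_sum1 oUi diamU]]]] :=
  srD _ WCD WC0 bWC (convexI cW cC) _ eps2_gt0.
have [A AP] := choice (fun i =>
  induced_open_convex_subset topD lcD tW cW cC (oUi i).1 (oUi i).2).
have AWC i : A i `<=` W `&` C.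
  by case: (AP i) => _ _ _; case: (oUi i) => [[V' [_ ->]] _] AUi z /AUi [].
have delta_gt0 : 0 < eps / (4 * M) by rewrite divr_gt0 ?mulr_gt0.
have [N [g [N_gt0 freq_close]]] := fiber_freq_approx lam_ge0 lam_sum1 delta_gt0.
exists N, (A \o g); split => // [k|].
  have [oA A0 _ _] := AP (g k); split => //; split => // z /AWC [Wz Cz].
  by split => //; apply: WU.
apply: le_lt_trans (diam_mink_avg_le g lam Ui A M _ _ _ _ _ (ltW diamU)) _.
1-3: by move=> i; case: (AP i).
  by move=> i z /AWC /WCD /DM.
rewrite lte_fin; set s := \sum_i _.
have : (M + M) * s < (M + M) * (eps / (4 * M)) by rewrite ltr_pM2l ?addr_gt0.
have -> : (M + M) * (eps / (4 * M)) = eps / 2 by field; rewrite gt_eqF.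
lra.
Qed.
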